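(* Let $\mathbf{P}=(X,P)$ be a dually-CPT poset and let $M$ be a strong clique module of $\mathbf{P}$ such that the subposet induced by $M$ is CI. If an element $z\in M$ is represented by a trivial path in a CPT representation $\{W_x\}_{x\in X}$ of $\mathbf{P}$, then there exists a CPT representation $\{W'_x\}_{x\in X}$ of $\mathbf{P}$ in which $z$ is represented by a non-trivial path.
   Context: A poset is CPT if there is a tree $T$ and paths $W_x$ of $T$ with $x<y$ iff $W_x\subsetneq W_y$ (a CPT representation); CI if this can be done with $T$ a path. $\mathbf{P}$ is dually-CPT if both $\mathbf{P}$ and its dual are CPT. A module is a set $M\subseteq X$ such that each $y\notin M$ is comparable to all or to none of the elements of $M$; it is strong if for every module $M'$, $M\cap M'=\emptyset$, $M\subseteq M'$ or $M'\subseteq M$. A strong module $M$ is a clique module if the complement of the comparability graph induced on $M$ is disconnected. A trivial path consists of a single vertex. *)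

From mathcomp Require Import all_boot.
Set Implicit Arguments. Unset Strict Implicit. Unset Printing Implicit Defensive.

Definition strict_order (X : finType) (lt : rel X) : Prop :=
  irreflexive lt /\ transitive lt.

Definition simple_graph (V : finType) (e : rel V) : Prop :=
  irreflexive e /\ symmetric e.

Definition is_tree (V : finType) (e : rel V) : Prop :=
  [/\ simple_graph e, 0 < #|V|,
      (forall u v : V, connect e u v) &
      ~ (exists c : seq V, [/\ 3 <= size c, uniq c & cycle e c])].

Definition is_graph_path (V : finType) (e : rel V) (W : {set V}) : Prop :=
  exists (v0 : V) (p : seq V), [/\ uniq (v0 :: p), path e v0 p & W = [set x in v0 :: p]].

Definition CPT_rep_on (X : finType) (lt : rel X) (A : {set X})
  (V : finType) (e : rel V) (W : X -> {set V}) : Prop :=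
  [/\ is_tree e,
      (forall x, x \in A -> is_graph_path e (W x)) &
      (forall x y, x \in A -> y \in A -> (lt x y <-> W x \proper W y))].

Definition CPT_rep (X : finType) (lt : rel X) (V : finType) (e : rel V) (W : X -> {set V}) :=
  CPT_rep_on lt [set: X] e W.

Definition is_CPT_on (X : finType) (lt : rel X) (A : {set X}) : Prop :=
  exists (V : finType) (e : rel V) (W : X -> {set V}), CPT_rep_on lt A e W.

Definition is_CI_on (X : finType) (lt : rel X) (A : {set X}) : Prop :=
  exists (V : finType) (e : rel V) (W : X -> {set V}),
    CPT_rep_on lt A e W /\ is_graph_path e [set: V].

Definition dual_rel (X : finType) (lt : rel X) : rel X := fun x y => lt y x.

Definition dually_CPT (X : finType) (lt : rel X) : Prop :=
  is_CPT_on lt [set: X] /\ is_CPT_on (dual_rel lt) [set: X].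

Definition comparable (X : finType) (lt : rel X) (x y : X) : bool := lt x y || lt y x.

Definition is_module (X : finType) (lt : rel X) (M : {set X}) : Prop :=
  forall y, y \notin M ->
    (forall m, m \in M -> comparable lt y m) \/ (forall m, m \in M -> ~~ comparable lt y m).

Definition strong_module (X : finType) (lt : rel X) (M : {set X}) : Prop :=
  is_module lt M /\
  forall M' : {set X}, is_module lt M' ->
    [\/ M :&: M' = set0, M \subset M' | M' \subset M].

Definition incomp_graph_on (X : finType) (lt : rel X) (M : {set X}) : rel X :=
  fun a b => [&& a \in M, b \in M, a != b & ~~ comparable lt a b].

Definition clique_module (X : finType) (lt : rel X) (M : {set X}) : Prop :=
  strong_module lt M /\
  exists a b, [/\ a \in M, b \in M & ~~ connect (incomp_graph_on lt M) a b].

(* Every path is nonempty, so the trivial path W z = {w} makes z minimal.  Since M is a clique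
   module, some c in M is not reachable from z in the incomparability graph of M; then z < c, and
   W z proper in W c yields a neighbour p of w on W c.  Subdividing the edge wp by a new vertex,
   added to every path through w, gives a CPT representation in which z is non-trivial, provided
   every path through w either contains p or ends at w.
   - If some y lies above all of M, a path W x through w avoiding p lies inside W y: otherwise
     z < x with x outside M, so x is comparable to c, and c < x would put p in W x.  As W y is a
     path containing w and p, w has at most one other neighbour in it.
   - Otherwise the strong module property, applied to the union of the component of z with the
     outside elements comparable to z, shows that no element outside M is comparable to an
     element of M.  The interval representation of M can then be glued by one edge to the given
     tree, once it has been subdivided itself: in a path, w has at most two neighbours anyway. *)

From mathcomp Require Import all_boot.
Set Implicit Arguments. Unset Strict Implicit. Unset Printing Implicit Defensive.

Lemma connect_homo (T T' : finType) (r : rel T) (r' : rel T') (f : T -> T') :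
  (forall x y, r x y -> connect r' (f x) (f y)) ->
  forall x y, connect r x y -> connect r' (f x) (f y).
Proof.
move=> homo_f x _ /connectP[q pq ->]; elim: q x pq => //= y q IH x /andP[rxy /IH].
exact/connect_trans/homo_f.
Qed.

Lemma map_Some_pmap (T : eqType) (s : seq (option T)) : None \notin s -> map Some (pmap id s) = s.
Proof. by elim: s => //= -[a|] s IH; rewrite inE //= => /IH ->. Qed.

Lemma imset_proper_inj (T T' : finType) (f : T -> T') (A B : {set T}) :
  injective f -> (f @: A \proper f @: B) = (A \proper B).
Proof.
move=> f_inj; suff sub (C D : {set T}) : (f @: C \subset f @: D) = (C \subset D).
  by rewrite !properE !sub.
apply/idP/idP => [/subsetP sCD|/imsetS //]; apply/subsetP => x xC.
by have := sCD (f x); rewrite !(mem_imset _ _ f_inj); apply.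
Qed.

(** * Paths in trees *)

Definition at_most_one_nbr (V : finType) (e : rel V) (S : {set V}) (w : V) : bool :=
  #|[set u in S | e w u]| <= 1.

Lemma graph_path_nonempty (V : finType) (e : rel V) S : is_graph_path e S -> exists v, v \in S.
Proof. by case=> v0 [q [_ _ ->]]; exists v0; rewrite inE mem_head. Qed.

Lemma graph_path_of_seq (V : finType) (e : rel V) (s : seq V) :
  uniq s -> sorted e s -> s != [::] -> is_graph_path e [set x in s].
Proof. by case: s => // x s ut st _; exists x, s. Qed.

Lemma graph_path_imset (V V' : finType) (e : rel V) (e' : rel V') (f : V -> V') S :
  injective f -> (forall x y, e' (f x) (f y) = e x y) ->
  is_graph_path e S -> is_graph_path e' (f @: S).
Proof.
move=> f_inj f_edge [v0 [q [un pq ->]]]; exists (f v0), (map f q); split.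
- by rewrite -map_cons (map_inj_uniq f_inj).
- by rewrite path_map (eq_path f_edge).
- apply/setP => y; rewrite inE -map_cons.
  by apply/imsetP/mapP => -[x xin ->]; exists x; rewrite ?inE in xin *.
Qed.

Lemma graph_path_nbr (V : finType) (e : rel V) S w x : symmetric e -> is_graph_path e S ->
  w \in S -> x \in S -> x != w -> exists2 u, u \in S & e w u.
Proof.
move=> e_sym [v0 [q [_ pq ->]]]; rewrite !in_set => wS xS nxw.
have so : sorted e (v0 :: q) by [].
move: so xS; case/splitPr: wS => s1 s2; case: s2 => [|u s2].
  case/lastP: s1 => [|s1 u]; first by rewrite /= inE (negPf nxw).
  rewrite cat_rcons sorted_cat_cons /= => /andP[_ /andP[euw _]] _.
  by exists u; rewrite 1?e_sym // in_set mem_cat inE eqxx orbT.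
rewrite sorted_cat_cons /= => /andP[_ /andP[ewu _]] _.
by exists u; rewrite // in_set mem_cat !inE eqxx !orbT.
Qed.

Lemma singleton_proper_nbr (V : finType) (e : rel V) (S : {set V}) w :
  symmetric e -> is_graph_path e S -> [set w] \proper S -> exists2 p, p \in S & e w p.
Proof.
move=> e_sym gpS /properP[/subsetP sub [x xS xw]].
apply: (graph_path_nbr e_sym gpS (sub w (set11 w)) xS).
by apply: contraNneq xw => ->; rewrite inE.
Qed.

Lemma at_most_one_nbr_end (V : finType) (e : rel V) s1 w s2 : symmetric e ->
  sorted e (s1 ++ w :: s2) -> uniq (s1 ++ w :: s2) ->
  at_most_one_nbr e [set x in s1 ++ w :: s2] w -> s1 = [::] \/ s2 = [::].
Proof.
move=> e_sym; case: s2 => [|b s2]; [by right | case/lastP: s1 => [|s1 a]; [by left|]].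
rewrite cat_rcons sorted_cat_cons /= => /and3P[_ eaw /andP[ewb _]] un one_nbr.
have ab : a = b.
  apply: (card_le1_eqP one_nbr); rewrite !inE ?mem_cat ?mem_rcons ?inE ?eqxx ?orbT //.
  by rewrite e_sym.
by move: un; rewrite ab cat_uniq => /and3P[_ _] /=; rewrite !inE eqxx orbT.
Qed.

Section Tree.
Variables (V : finType) (e : rel V).
Hypothesis tree_e : is_tree e.

Lemma tree_sym : symmetric e. Proof. by case: tree_e => -[]. Qed.
Lemma tree_irr : irreflexive e. Proof. by case: tree_e => -[]. Qed.

Lemma tree_path_back_edge a t b :
  path e a (rcons t b) -> uniq (a :: rcons t b) -> e b a -> t = [::].
Proof.
case: t => // c t pt ut eba; case: tree_e => _ _ _ []; exists (a :: rcons (c :: t) b).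
split; rewrite //= ?size_rcons //.
by move: pt => /= /andP[-> pt]; rewrite rcons_path pt last_rcons eba.
Qed.

Lemma tree_sorted_nbr s1 w s2 u :
  sorted e (s1 ++ w :: s2) -> uniq (s1 ++ w :: s2) -> u \in s1 ++ w :: s2 -> e w u ->
  u = head w s2 \/ u = last w s1.
Proof.
move=> so un; rewrite mem_cat inE => uin ewu.
have [/eqP uw|nuw] := boolP (u == w); first by move: ewu; rewrite uw tree_irr.
move: so un; rewrite (negPf nuw) /= in uin; case/orP: uin => /splitPr[t1 t2] so un.
- right; suff -> : t2 = [::] by rewrite last_cat.
  apply: (@tree_path_back_edge u t2 w); last exact: ewu.
    by move: so; rewrite -catA sorted_cat_cons cat_path rcons_path => /and3P[_ -> /andP[]].
  by move: un; rewrite -catA cat_uniq -cat_rcons cat_uniq => /and3P[_ _ /andP[]].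
- left; suff -> : t1 = [::] by [].
  apply: (@tree_path_back_edge w t1 u); last by rewrite tree_sym.
    by move: so; rewrite sorted_cat_cons cat_path rcons_path => /andP[_ /andP[-> /= /andP[]]].
  by move: un; rewrite cat_uniq => /and3P[_ _]; rewrite -cat_cons -cat_rcons cat_uniq => /andP[].
Qed.
End Tree.

(* The only neighbours of [w] on the path are its two neighbours in the sequence, and [p] is
   one of them. *)
Lemma tree_at_most_one_nbr (V : finType) (e : rel V) (S R : {set V}) w p :
  is_tree e -> is_graph_path e S -> w \in S -> p \in S -> e w p ->
  R \subset S -> p \notin R -> at_most_one_nbr e R w.
Proof.
move=> tree_e [v0 [q [un pq ->]]]; rewrite in_set => wS pS ewp /subsetP RS pR.
apply/card_le1_eqP => u u'; rewrite !inE => /andP[uR ewu] /andP[u'R ewu'].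
have so : sorted e (v0 :: q) by [].
have nup : u != p by apply: contraNneq pR => <-.
have nu'p : u' != p by apply: contraNneq pR => <-.
move: so un pS (RS u uR) (RS u' u'R); rewrite !in_set.
case/splitPr: wS => s1 s2 so un pS uS u'S; have nbr := tree_sorted_nbr tree_e so un.
move: nup nu'p; case: (nbr _ pS ewp) => ->; case: (nbr _ uS ewu) => ->;
  by case: (nbr _ u'S ewu') => ->; rewrite ?eqxx.
Qed.

(** * Subdividing an edge *)

Section Subdivision.
Variables (V : finType) (e : rel V) (w p : V).
Hypotheses (tree_e : is_tree e) (ewp : e w p).

Definition subdiv_end (v : V) : bool := (v == w) || (v == p).

Definition subdiv (x y : option V) : bool :=
  match x, y with
  | Some a, Some b => e a b && ~~ (subdiv_end a && subdiv_end b)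
  | None, Some b | Some b, None => subdiv_end b
  | None, None => false
  end.

Definition subdiv_set (S : {set V}) : {set option V} :=
  [set x | if x is Some a then a \in S else w \in S].

Lemma subdiv_sym : symmetric subdiv.
Proof. by case=> [a|] [b|] //=; rewrite (tree_sym tree_e) [subdiv_end a && _]andbC. Qed.

Lemma subdiv_irr : irreflexive subdiv.
Proof. by case=> [a|] //=; rewrite (tree_irr tree_e). Qed.

Lemma subdiv_ends_edge a b : subdiv_end a -> subdiv_end b -> a != b -> e a b.
Proof.
by rewrite /subdiv_end => /orP[] /eqP-> /orP[] /eqP->; rewrite ?eqxx // (tree_sym tree_e).
Qed.

Lemma subdiv_connect_edge a b : e a b -> connect subdiv (Some a) (Some b).
Proof.
move=> eab; have [/andP[ea eb]|] := boolP (subdiv_end a && subdiv_end b).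
  by apply: (@connect_trans _ _ None); apply: connect1.
by move=> nab; apply: connect1; rewrite /= eab.
Qed.

Lemma subdiv_acyclic c : uniq c -> cycle subdiv c -> 3 <= size c -> False.
Proof.
case: (tree_e) => _ _ _ acyclic un cy sz.
have [Nc|Nc] := boolP (None \in c); last first.
  apply: acyclic; exists (pmap id c).
  move: un cy sz; rewrite -{1 2 3}(map_Some_pmap Nc) size_map cycle_map.
  rewrite (map_inj_uniq (@Some_inj _)) => un cy sz; split=> //.
  by apply: sub_cycle cy => a b /andP[].
case/rot_to: Nc => i t E.
move: sz un cy; rewrite -(size_rot i) -(rot_uniq i) -(rot_cycle i) E /= => sz /andP[Nt un] cy.
move: un cy sz; rewrite -(map_Some_pmap Nt).
case: (pmap id t) => [|a t1] //; case/lastP: t1 => [|t1 b] //.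
rewrite /= !size_map size_rcons (map_inj_uniq (@Some_inj _)) (mem_map (@Some_inj _)).
rewrite rcons_path path_map last_map last_rcons => /andP[na un] /and3P[ea pt eb] _.
have eba : e b a.
  by apply: subdiv_ends_edge => //; apply: contraNneq na => ->; rewrite mem_rcons mem_head.
have t10 : t1 = [::].
  apply: (tree_path_back_edge tree_e _ _ eba); last by rewrite /= na.
  by apply: sub_path pt => x y /andP[].
by move: pt ea eb; rewrite t10 /= andbT => /andP[_ /negP nab] ea eb; apply: nab; rewrite ea eb.
Qed.

Lemma subdiv_tree : is_tree subdiv.
Proof.
case: (tree_e) => _ _ conn _.
have to_w x : connect subdiv x (Some w).
  case: x => [a|]; last by apply: connect1; rewrite /= /subdiv_end eqxx.
  exact: connect_homo subdiv_connect_edge _ _ (conn a w).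
split.
- by split; [exact: subdiv_irr | exact: subdiv_sym].
- by rewrite card_option.
- by move=> x y; apply: connect_trans (to_w x) _; rewrite (sym_connect_sym subdiv_sym).
- by case=> c [sz un cy]; apply: (subdiv_acyclic un cy sz).
Qed.

Lemma subdiv_Some_off v : v \in [:: w; p] ->
  {in predC1 v &, forall a b, subdiv (Some a) (Some b) = e a b}.
Proof.
move=> vwp a b; rewrite !inE /= => av bv; case eab: (e a b) => //=; apply/negP => /andP[].
have nab : a != b by apply: contraTneq eab => ->; rewrite (tree_irr tree_e).
move: vwp av bv nab; rewrite /subdiv_end !inE => /orP[]/eqP-> /negPf-> /negPf->;
  by rewrite ?orbF /= => nab /eqP ea /eqP eb; rewrite ea eb eqxx in nab.
Qed.

Lemma sorted_subdiv_off v (s : seq V) : v \in [:: w; p] -> v \notin s ->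
  sorted subdiv (map Some s) = sorted e s.
Proof.
move=> vwp vs; rewrite sorted_map; apply/esym/(eq_in_sorted (P := predC1 v)).
  by move=> a b ain bin; exact/esym/(subdiv_Some_off vwp).
by apply/allP=> a ain /=; apply: contraNneq vs => <-.
Qed.

(* [head p s2 = p] says that [s2] is empty or starts with [p]. *)
Lemma subdiv_path_core s1 s2 :
  sorted e (s1 ++ w :: s2) -> uniq (s1 ++ w :: s2) -> p \notin s1 -> head p s2 = p ->
  is_graph_path subdiv (subdiv_set [set x in s1 ++ w :: s2]).
Proof.
move=> so un ps1 hs2.
have pw : p != w by apply: contraTneq ewp => ->; rewrite (tree_irr tree_e).
have -> : subdiv_set [set x in s1 ++ w :: s2] =
          [set x in map Some s1 ++ Some w :: None :: map Some s2].
  by apply/setP => -[a|]; rewrite !inE ?mem_cat ?inE ?(mem_map (@Some_inj _)) ?eqxx ?orbT.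
apply: graph_path_of_seq; last by case: s1 {so un ps1}.
  rewrite -(cat1s None) -(cat1s (Some w)) catA uniq_catCA cat1s -catA cat1s -map_cons -map_cat.
  by rewrite /= (map_inj_uniq (@Some_inj _)) un andbT; apply/mapP => -[].
move: so; rewrite !sorted_cat_cons -map_rcons => /andP[so1 so2].
rewrite (@sorted_subdiv_off p) ?so1 ?inE ?eqxx ?orbT //=; last by rewrite mem_rcons inE negb_or pw.
rewrite /subdiv_end eqxx /=; case: s2 hs2 so2 un => //= _ s2 -> /andP[_ so2] un.
rewrite /subdiv_end eqxx orbT /=.
change (sorted subdiv (map Some (p :: s2))); rewrite (@sorted_subdiv_off w) ?inE ?eqxx ?orbT //.
by move: un; rewrite cat_uniq => /and3P[_ _ /andP[]].
Qed.

Lemma subdiv_path_core_rev s1 s2 :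
  sorted e (s1 ++ w :: s2) -> uniq (s1 ++ w :: s2) -> p \notin s2 -> last p s1 = p ->
  is_graph_path subdiv (subdiv_set [set x in s1 ++ w :: s2]).
Proof.
move=> so un ps2 ls1.
have rev_s : rev (s1 ++ w :: s2) = rev s2 ++ w :: rev s1 by rewrite rev_cat rev_cons cat_rcons.
have -> : [set x in s1 ++ w :: s2] = [set x in rev s2 ++ w :: rev s1].
  by apply/setP => x; rewrite !inE -rev_s mem_rev.
apply: subdiv_path_core; rewrite -?rev_s ?rev_uniq ?mem_rev //.
  by rewrite rev_sorted (eq_sorted (e' := e)) // => x y; rewrite (tree_sym tree_e).
by case/lastP: s1 {so un rev_s} ls1 => // s1 a; rewrite rev_rcons last_rcons.
Qed.

(* A path through [w] stays a path when the new vertex is added iff it crosses the edge [wp]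
   or ends at [w]. *)
Definition subdiv_compatible (S : {set V}) : Prop :=
  w \in S -> p \in S \/ at_most_one_nbr e S w.

Lemma subdiv_graph_path S :
  is_graph_path e S -> subdiv_compatible S -> is_graph_path subdiv (subdiv_set S).
Proof.
case=> v0 [q [un pq ->]] cond; have so : sorted e (v0 :: q) by [].
have pw : p != w by apply: contraTneq ewp => ->; rewrite (tree_irr tree_e).
have [ws|ws] := boolP (w \in v0 :: q); last first.
  have -> : subdiv_set [set x in v0 :: q] = [set x in map Some (v0 :: q)].
    apply/setP => -[a|]; rewrite !in_set ?(mem_map (@Some_inj _)) // (negPf ws).
    by apply/esym/mapP => -[].
  apply: graph_path_of_seq => //; first by rewrite (map_inj_uniq (@Some_inj _)).
  by rewrite (@sorted_subdiv_off w) ?inE ?eqxx.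
have {}cond := cond ltac:(by rewrite inE).
move: so un cond; case/splitPr: ws => s1 s2 so un cond.
have [ps|ps] := boolP (p \in s1 ++ w :: s2).
  case: (tree_sorted_nbr tree_e so un ps ewp) => Ep.
    case: s2 Ep so un {cond ps} => [/= Ep|_ s2 /= <-] so un; first by rewrite Ep eqxx in pw.
    apply: subdiv_path_core => //; move: un; rewrite cat_uniq => /and3P[_ /hasPn-> //].
    by rewrite !inE eqxx orbT.
  case/lastP: s1 Ep so un {cond ps} => [/= Ep|s1 a]; first by rewrite Ep eqxx in pw.
  rewrite last_rcons => <- so un; apply: subdiv_path_core_rev; rewrite ?last_rcons //.
  move: un; rewrite cat_uniq => /and3P[_ /hasPn/(_ p)]; rewrite mem_rcons mem_head.
  by move=> H _; apply/negP => ps2; move: H; rewrite inE ps2 orbT => /(_ isT).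
case: cond => [|/(at_most_one_nbr_end (tree_sym tree_e) so un) [s1E|s2E]].
- by rewrite inE (negPf ps).
- subst s1; apply: subdiv_path_core_rev => //.
  by apply: contraNN ps => ps2; rewrite /= inE ps2 orbT.
- by subst s2; apply: subdiv_path_core => //; apply: contraNN ps; rewrite mem_cat => ->.
Qed.

Lemma subdiv_set_subset A B : (subdiv_set A \subset subdiv_set B) = (A \subset B).
Proof.
apply/subsetP/subsetP => sAB; last by case=> [a|]; rewrite !inE; apply: sAB.
by move=> a aA; have := sAB (Some a); rewrite !inE; apply.
Qed.

Lemma subdiv_set_proper A B : (subdiv_set A \proper subdiv_set B) = (A \proper B).
Proof. by rewrite !properE !subdiv_set_subset. Qed.

Lemma subdiv_CPT_rep_on (X : finType) (lt : rel X) (A : {set X}) (W : X -> {set V}) :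
  CPT_rep_on lt A e W -> {in A, forall x, subdiv_compatible (W x)} ->
  CPT_rep_on lt A subdiv (subdiv_set \o W).
Proof.
case=> _ gpW repW compW; split=> [|x xA|x y xA yA]; first exact: subdiv_tree.
  by apply: subdiv_graph_path; [exact: gpW | exact: compW].
by rewrite /= subdiv_set_proper; apply: repW.
Qed.

Lemma subdiv_set_nontrivial (S : {set V}) : w \in S -> 1 < #|subdiv_set S|.
Proof. by move=> wS; apply/card_gt1P; exists (Some w), None; rewrite !inE wS. Qed.

End Subdivision.

Lemma subdiv_nontrivial_rep (X : finType) (lt : rel X) (A : {set X}) (V : finType) (e : rel V)
    (W : X -> {set V}) z c w :
  CPT_rep_on lt A e W -> z \in A -> c \in A -> lt z c -> W z = [set w] ->
  (forall p, p \in W c -> e w p -> {in A, forall x, subdiv_compatible e w p (W x)}) ->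
  exists (V' : finType) (e' : rel V') (W' : X -> {set V'}), CPT_rep_on lt A e' W' /\ 1 < #|W' z|.
Proof.
move=> repW zA cA zc Wz compat; have [tree_e gpW ltW] := repW.
have Wz_c : [set w] \proper W c by rewrite -Wz; apply/ltW.
have [p pc ewp] := singleton_proper_nbr (tree_sym tree_e) (gpW c cA) Wz_c.
exists (option V), (subdiv e w p), (subdiv_set w \o W); split.
  by apply: (subdiv_CPT_rep_on tree_e ewp repW); apply: compat.
by apply: subdiv_set_nontrivial; rewrite Wz set11.
Qed.

(** * Gluing two trees along an edge *)

Section Glue.
Variables (V1 V2 : finType) (e1 : rel V1) (e2 : rel V2) (a : V1) (b : V2).
Hypotheses (tree_e1 : is_tree e1) (tree_e2 : is_tree e2).

Definition glue (x y : V1 + V2) : bool :=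
  match x, y with
  | inl x, inl y => e1 x y
  | inr x, inr y => e2 x y
  | inl x, inr y | inr y, inl x => (x == a) && (y == b)
  end.

Definition isl (x : V1 + V2) : bool := if x is inl _ then true else false.

Lemma glue_sym : symmetric glue.
Proof.
by case=> x [y|y] /=; first [exact: (tree_sym tree_e1) | exact: (tree_sym tree_e2) | done].
Qed.

Lemma glue_irr : irreflexive glue.
Proof. by case=> x /=; rewrite ?(tree_irr tree_e1) ?(tree_irr tree_e2). Qed.

Lemma glue_cross x y : glue x y -> isl x != isl y ->
  (inl a \in [:: x; y]) && (inr b \in [:: x; y]).
Proof. by case: x y => x [y|y] //= /andP[/eqP-> /eqP->]; rewrite !inE !eqxx ?orbT. Qed.

Lemma glue_path_cross x s : path glue x s -> isl x != isl (last x s) ->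
  (inl a \in x :: s) && (inr b \in x :: s).
Proof.
elim: s x => [|y s IH] x /=; first by rewrite eqxx.
case/andP=> gxy pys; have [xy|xy] := eqVneq (isl x) (isl y).
  by rewrite xy => /(IH _ pys) /andP[ay by_]; rewrite in_cons ay in_cons by_ !orbT.
by case/andP: (glue_cross gxy xy); rewrite !inE => /orP[]->/orP[]->; rewrite ?orbT.
Qed.

Lemma glue_connect x : connect glue x (inl a).
Proof.
case: tree_e1 tree_e2 => _ _ conn1 _ [_ _ conn2 _].
have homo_inl u v : e1 u v -> connect glue (inl u) (inl v) by move=> ?; apply: connect1.
have homo_inr u v : e2 u v -> connect glue (inr u) (inr v) by move=> ?; apply: connect1.
case: x => [u|u]; first exact: connect_homo homo_inl _ _ (conn1 u a).
apply: (@connect_trans _ _ (inr b)); first exact: connect_homo homo_inr _ _ (conn2 u b).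
by apply: connect1; rewrite /= !eqxx.
Qed.

Lemma glue_detour_inl h s : glue (inl a) h -> h != inr b ->
  path glue h (rcons s (inr b)) -> inl a \in h :: s.
Proof.
move=> gah hb /glue_path_cross; rewrite last_rcons.
have -> : isl h by case: h gah hb => // y /andP[_ /eqP->]; rewrite eqxx.
by case/(_ isT)/andP; rewrite -rcons_cons mem_rcons inE.
Qed.

Lemma glue_detour_inr h s : glue (inr b) h -> h != inl a ->
  path glue h (rcons s (inl a)) -> inr b \in h :: s.
Proof.
move=> gbh ha /glue_path_cross; rewrite last_rcons.
have -> : isl h = false by case: h gbh ha => // y /andP[/eqP-> _]; rewrite eqxx.
by case/(_ isT)/andP => _; rewrite -rcons_cons mem_rcons inE.
Qed.

Definition getl (x : V1 + V2) : option V1 := if x is inl u then Some u else None.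
Definition getr (x : V1 + V2) : option V2 := if x is inr u then Some u else None.

Lemma all_isl_map c : all isl c -> c = map inl (pmap getl c).
Proof. by elim: c => //= -[u|u] c IH //= /IH <-. Qed.

Lemma all_isr_map c : all (predC isl) c -> c = map inr (pmap getr c).
Proof. by elim: c => //= -[u|u] c IH //= /IH <-. Qed.

Lemma glue_cycle_ends c : uniq c -> cycle glue c -> ~~ all isl c -> ~~ all (predC isl) c ->
  inl a \in c /\ inr b \in c.
Proof.
move=> un cy /allPn[v vc /= vR] /allPn[u uc /negPn uL].
case/rot_to: uc => i t E; move: cy; rewrite -(rot_cycle i) E /=.
have : v \in u :: t by rewrite -E mem_rot.
rewrite inE; have [vu|_ /= vt] := eqVneq v u; first by rewrite vu uL in vR.
case/splitPr: vt E => t1 t2 E; rewrite rcons_cat cat_path /= => /and3P[pt1 gv _].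
have := @glue_path_cross u (rcons t1 v); rewrite rcons_path pt1 gv last_rcons.
rewrite uL (negPf vR) => /(_ isT isT) /andP[ac bc].
have sub : {subset u :: rcons t1 v <= c}.
  by move=> x xin; rewrite -(mem_rot i) E -cat_rcons -cat_cons mem_cat xin.
by split; apply: sub.
Qed.

(* Rotated to start at [inl a], a cycle meeting both sides must go straight to [inr b] and straight
   back, since changing sides again would revisit [inl a] or [inr b]. *)
Lemma glue_acyclic c : uniq c -> cycle glue c -> 3 <= size c -> False.
Proof.
case: tree_e1 tree_e2 => _ _ _ acyc1 [_ _ _ acyc2] un cy sz.
have [allL|notL] := boolP (all isl c).
  apply: acyc1; exists (pmap getl c); move: un cy sz; rewrite {1 2 3}(all_isl_map allL).
  by rewrite size_map (map_inj_uniq (@inl_inj _ _)) cycle_map.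
have [allR|notR] := boolP (all (predC isl) c).
  apply: acyc2; exists (pmap getr c); move: un cy sz; rewrite {1 2 3}(all_isr_map allR).
  by rewrite size_map (map_inj_uniq (@inr_inj _ _)) cycle_map.
have [ac bc] := glue_cycle_ends un cy notL notR.
case/rot_to: ac => j t E; move: un cy sz; rewrite -(rot_uniq j) -(rot_cycle j) -(size_rot j) E.
have bt : inr b \in t by move: bc; rewrite -(mem_rot j) E inE.
case/splitPr: bt => t1 t2 /= /andP[]; rewrite mem_cat negb_or inE negb_or => /and3P[at1 _ at2].
rewrite cat_uniq /= => /and3P[_ /norP[bt1 _] /andP[bt2 _]].
rewrite rcons_cat cat_path /= => /andP[pt1 /andP[gt1 pt2]].
have t1E : t1 = [::].
  case: t1 at1 bt1 pt1 gt1 => // h t1 at1 bt1 /= /andP[gah pt1] gt1; case/negP: at1.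
  apply: (glue_detour_inl gah); first by apply: contraNneq bt1 => <-; rewrite mem_head.
  by rewrite rcons_path pt1.
have t2E : t2 = [::].
  case: t2 at2 bt2 pt2 => // h t2 at2 bt2 /= /andP[gbh pt2]; case/negP: bt2.
  by apply: (glue_detour_inr gbh) => //; apply: contraNneq at2 => <-; rewrite mem_head.
by rewrite t1E t2E.
Qed.

Lemma glue_tree : is_tree glue.
Proof.
split.
- by split; [exact: glue_irr | exact: glue_sym].
- by rewrite card_sum; case: tree_e1 => _ V1_gt0 _ _; apply: leq_trans V1_gt0 (leq_addr _ _).
- move=> x y; apply: connect_trans (glue_connect x) _.
  by rewrite (sym_connect_sym glue_sym) glue_connect.
- by case=> c [sz un cy]; apply: (glue_acyclic un cy sz).
Qed.

End Glue.

Lemma glue_CPT_rep (X : finType) (lt : rel X) (M : {set X}) (V1 V2 : finType)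
    (e1 : rel V1) (e2 : rel V2) (W1 : X -> {set V1}) (W2 : X -> {set V2}) a b :
  CPT_rep_on lt M e1 W1 -> CPT_rep lt e2 W2 ->
  {in ~: M & M, forall x m, ~~ comparable lt x m} ->
  CPT_rep lt (glue e1 e2 a b) (fun x => if x \in M then inl @: W1 x else inr @: W2 x).
Proof.
case=> tree1 gp1 rep1 [tree2 gp2 rep2] apart; split; first exact: glue_tree.
  move=> x _; case: ifP => xM.
    by apply: graph_path_imset (gp1 x xM) => //; exact: inl_inj.
  by apply: graph_path_imset (gp2 x (in_setT x)) => //; exact: inr_inj.
move=> x y _ _; case: ifP => xM; case: ifP => yM.
- by rewrite imset_proper_inj; [exact: rep1 | exact: inl_inj].
- split=> [lxy|/proper_sub/subsetP sub].
    by have := apart y x; rewrite inE yM xM /comparable lxy orbT => /(_ isT isT).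
  have [v vx] := graph_path_nonempty (gp1 x xM).
  by have /imsetP[] := sub (inl v) (imset_f _ vx).
- split=> [lxy|/proper_sub/subsetP sub].
    by have := apart x y; rewrite inE yM xM /comparable lxy => /(_ isT isT).
  have [v vx] := graph_path_nonempty (gp2 x (in_setT x)).
  by have /imsetP[] := sub (inr v) (imset_f _ vx).
- by rewrite imset_proper_inj; [apply: rep2; rewrite inE | exact: inr_inj].
Qed.

(** * Modules *)

Section Poset.
Variables (X : finType) (lt : rel X).

Lemma comparable_sym : symmetric (comparable lt).
Proof. by move=> x y; rewrite /comparable orbC. Qed.

Lemma incomp_graph_sym (M : {set X}) : symmetric (incomp_graph_on lt M).
Proof. by move=> x y; rewrite /incomp_graph_on andbCA eq_sym comparable_sym. Qed.

Lemma module_comparable (M : {set X}) y z m : is_module lt M -> y \notin M ->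
  z \in M -> m \in M -> comparable lt y z -> comparable lt y m.
Proof.
move=> modM yM zM mM; case: (modM y yM) => M_y; first by move=> _; exact: M_y.
by rewrite (negPf (M_y z zM)).
Qed.

Lemma CPT_rep_ltE (V : finType) (e : rel V) (W : X -> {set V}) x y :
  CPT_rep lt e W -> lt x y = (W x \proper W y).
Proof. by case=> _ _ repW; apply/idP/idP => /repW; apply; rewrite inE. Qed.

Lemma CPT_rep_singleton_minimal (A : {set X}) (V : finType) (e : rel V) (W : X -> {set V}) z w x :
  CPT_rep_on lt A e W -> x \in A -> z \in A -> W z = [set w] -> ~~ lt x z.
Proof.
case=> _ gpW repW xA zA Wz; apply/negP => /(repW x z xA zA)/proper_card.
rewrite Wz cards1 ltnS leqn0 cards_eq0 => /eqP Wx0.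
by have [v] := graph_path_nonempty (gpW x xA); rewrite Wx0 inE.
Qed.

Lemma clique_module_unreachable (M : {set X}) z : clique_module lt M -> z \in M ->
  exists2 c, c \in M & ~~ connect (incomp_graph_on lt M) z c.
Proof.
case=> _ [a [b [aM bM nab]]] _; have [za|] := boolP (connect (incomp_graph_on lt M) z a).
  exists b => //; apply: contra nab => zb; apply: (@connect_trans _ _ z) zb.
  by rewrite (sym_connect_sym (incomp_graph_sym M)).
by exists a.
Qed.

Lemma unreachable_minimal_lt (M : {set X}) z c : (forall x, ~~ lt x z) -> z \in M -> c \in M ->
  ~~ connect (incomp_graph_on lt M) z c -> lt z c.
Proof.
move=> zmin zM cM zc; have : comparable lt z c.
  apply: contraNT (zc) => nzc; apply: connect1; rewrite /incomp_graph_on zM cM nzc andbT.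
  by apply: contraNneq zc => <-; rewrite connect0.
by rewrite /comparable (negPf (zmin c)) orbF.
Qed.

Hypothesis lt_trans : transitive lt.

Section UpperBound.
Variables (M : {set X}) (V : finType) (e : rel V) (W : X -> {set V}) (z c y : X) (w p : V).
Hypotheses (modM : is_module lt M) (repW : CPT_rep lt e W) (Wz : W z = [set w]).
Hypotheses (zM : z \in M) (cM : c \in M) (pc : p \in W c).
Hypothesis (M_below_y : {in M, forall m, lt m y}).

Lemma upper_bound_subset m : m \in M -> W m \subset W y.
Proof. by move/M_below_y; rewrite (CPT_rep_ltE _ _ repW) => /proper_sub. Qed.

Lemma upper_bound_avoid x : w \in W x -> p \notin W x -> W x \subset W y.
Proof.
move=> wx px; have [Wx_z|nWx_z] := boolP (W x \subset W z).
  exact: subset_trans Wx_z (upper_bound_subset zM).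
have zx : lt z x by rewrite (CPT_rep_ltE _ _ repW) properE nWx_z Wz sub1set wx.
have [xM|xM] := boolP (x \in M); first exact: upper_bound_subset.
have := module_comparable modM xM zM cM; rewrite /comparable zx orbT => /(_ isT)/orP[xc|cx].
  by apply: proper_sub; rewrite -(CPT_rep_ltE _ _ repW) (lt_trans xc) ?M_below_y.
move: cx; rewrite (CPT_rep_ltE _ _ repW) => /proper_sub/subsetP/(_ p pc).
by rewrite (negPf px).
Qed.

Lemma upper_bound_compatible x : e w p -> subdiv_compatible e w p (W x).
Proof.
move=> ewp wx; have [px|px] := boolP (p \in W x); [by left | right].
have [tree_e gpW _] := repW.
have wy : w \in W y by apply: (subsetP (upper_bound_subset zM)); rewrite Wz set11.
have py : p \in W y by apply: (subsetP (upper_bound_subset cM)).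
exact: tree_at_most_one_nbr tree_e (gpW y (in_setT y)) wy py ewp (upper_bound_avoid wx px) px.
Qed.
End UpperBound.

Lemma component_union_module (M : {set X}) z : is_module lt M -> (forall x, ~~ lt x z) ->
  z \in M -> (forall y, exists2 m, m \in M & ~~ lt m y) ->
  is_module lt ([set m in M | connect (incomp_graph_on lt M) z m] :|:
                [set y | (y \notin M) && comparable lt y z]).
Proof.
move=> modM zmin zM no_ub x; rewrite !inE negb_or => /andP[xA xY].
have [xM|xM] := boolP (x \in M).
  left=> m; rewrite !inE => /orP[/andP[mM zm]|/andP[mM' mz]].
    have [mx|nmx] := eqVneq m x; first by rewrite -mx mM zm in xA.
    apply: contraNT xA => nxm; rewrite xM /=; apply: (@connect_trans _ _ m) zm (connect1 _).
    by rewrite /incomp_graph_on mM xM nmx comparable_sym.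
  by rewrite comparable_sym; apply: module_comparable modM mM' zM xM mz.
right; have xz : ~~ comparable lt x z by rewrite xM in xY.
have x_apart m : m \in M -> ~~ comparable lt x m.
  by move=> mM; apply: contra xz; apply: module_comparable modM xM mM zM.
move=> m; rewrite !inE => /orP[/andP[mM _]|/andP[mM' mz]]; first exact: x_apart.
have zm : lt z m by move: mz; rewrite /comparable (negPf (zmin m)).
apply/negP; rewrite /comparable => /orP[xm|mx].
  have [m' m'M nm'm] := no_ub m.
  have := module_comparable modM mM' zM m'M mz; rewrite /comparable (negPf nm'm) orbF => mm'.
  by have := x_apart m' m'M; rewrite /comparable (lt_trans xm mm').
by move: xz; rewrite /comparable (lt_trans zm mx) orbT.
Qed.

Lemma clique_module_isolated (M : {set X}) z c : strong_module lt M -> (forall x, ~~ lt x z) ->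
  z \in M -> c \in M -> ~~ connect (incomp_graph_on lt M) z c ->
  (forall y, exists2 m, m \in M & ~~ lt m y) ->
  {in ~: M & M, forall x m, ~~ comparable lt x m}.
Proof.
case=> modM strongM zmin zM cM zc no_ub.
have := strongM _ (component_union_module modM zmin zM no_ub).
case=> [/setP/(_ z)|/subsetP/(_ c cM)|/subsetP sub].
- by rewrite !inE zM connect0.
- by rewrite !inE cM (negPf zc).
move=> x m; rewrite inE => xM mM; apply: contra (xM) => xm.
by apply: sub; rewrite !inE (negPf xM) (module_comparable modM xM mM zM xm).
Qed.

End Poset.

Lemma CI_rep_nontrivial (X : finType) (lt : rel X) (M : {set X}) z c :
  is_CI_on lt M -> z \in M -> c \in M -> lt z c ->
  exists (V : finType) (e : rel V) (W : X -> {set V}), CPT_rep_on lt M e W /\ 1 < #|W z|.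
Proof.
case=> V [e [W [repW pathV]]] zM cM zc; have [tree_e gpW _] := repW.
have [|Wz_le1] := ltnP 1 #|W z|; first by exists V, e, W.
have [w wz] := graph_path_nonempty (gpW z zM).
have Wz : W z = [set w] by apply/eqP; rewrite eq_sym eqEcard sub1set wz cards1.
apply: (subdiv_nontrivial_rep repW zM cM zc Wz) => p _ ewp x _ wx.
have [px|px] := boolP (p \in W x); [by left | right].
exact: tree_at_most_one_nbr tree_e pathV (in_setT w) (in_setT p) ewp (subsetT _) px.
Qed.

Unset Implicit Arguments.

Theorem mainTheorem5 (X : finType) (lt : rel X) (M : {set X}) (z : X)
  (V : finType) (e : rel V) (W : X -> {set V}) :
  strict_order lt ->
  dually_CPT lt ->
  clique_module lt M ->
  is_CI_on lt M ->
  CPT_rep lt e W ->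
  z \in M ->
  #|W z| = 1 ->
  exists (V' : finType) (e' : rel V') (W' : X -> {set V'}),
    CPT_rep lt e' W' /\ 1 < #|W' z|.
Proof.
move=> [_ lt_trans] _ cliqueM CI_M repW zM /eqP/cards1P[w Wz].
have zmin x : ~~ lt x z := CPT_rep_singleton_minimal repW (in_setT x) (in_setT z) Wz.
have [c cM zc_far] := clique_module_unreachable cliqueM zM.
have zc := unreachable_minimal_lt zmin zM cM zc_far.
have [/existsP[y /forall_inP M_below_y]|no_ub] := boolP [exists y, [forall m in M, lt m y]].
  apply: (subdiv_nontrivial_rep repW (in_setT z) (in_setT c) zc Wz) => p pc ewp x _.
  exact: (upper_bound_compatible lt_trans cliqueM.1.1 repW Wz zM cM pc M_below_y).
have {}no_ub y : exists2 m, m \in M & ~~ lt m y.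
  by move/existsPn/(_ y)/forall_inPn: no_ub => -[m mM nmy]; exists m.
have apart := clique_module_isolated lt_trans cliqueM.1 zmin zM cM zc_far no_ub.
have [V1 [e1 [W1 [repW1 W1z]]]] := CI_rep_nontrivial CI_M zM cM zc.
have [a _] : exists a, a \in W1 z by apply/card_gt0P/ltnW.
exists (V1 + V)%type, (glue e1 e a w), (fun x => if x \in M then inl @: W1 x else inr @: W x).
by split; [exact: glue_CPT_rep | rewrite zM card_imset //; exact: inl_inj].
Qed.
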